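(* Let $n,m\in\mathbb{N}$ with $n\geq 3$ and $1\le m\leq \frac{n}{2}$. Then the Johnson graph $J(n,m)$ is panconnected.
   Context: For $n,m\in\mathbb{N}$ with $m<n$, the Johnson graph $J(n,m)$ is the simple graph whose vertex set is the set of all $m$-element subsets of $[n]=\{1,\dots,n\}$, two vertices $v,w$ being adjacent if and only if $|v\cap w|=m-1$. A graph $G$ of order $N>2$ is panconnected if for every two distinct vertices $u,v$ and every integer $l$ with $d(u,v)\le l\le N-1$ there is a $u$-$v$ path of length $l$ in $G$ (here $d$ is the graph distance and the length of a path is its number of edges). *)

From mathcomp Require Import all_boot.
Set Implicit Arguments. Unset Strict Implicit. Unset Printing Implicit Defensive.

Definition johnson_vertex (n m : nat) : finType :=
  {A : {set 'I_n} | #|A| == m}.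

Definition johnson_adj (n m : nat) : rel (johnson_vertex n m) :=
  fun v w => #|val v :&: val w| == m - 1.

(* A u-v path in graph e: vertices u = x_0, x_1, ..., x_l = v, pairwise
   distinct, consecutive ones adjacent.  The path is u :: p, its length is
   size p (number of edges). *)
Definition is_upath (T : finType) (e : rel T) (u v : T) (p : seq T) : Prop :=
  [/\ path e u p, last u p = v & uniq (u :: p)].

Definition is_dist (T : finType) (e : rel T) (u v : T) (d : nat) : Prop :=
  (exists p, is_upath e u v p /\ size p = d) /\
  (forall p, is_upath e u v p -> d <= size p).

Definition panconnected (T : finType) (e : rel T) : Prop :=
  2 < #|T| /\
  forall u v : T, u != v -> forall d : nat, is_dist e u v d ->
  forall l : nat, d <= l <= #|T| - 1 ->
  exists p : seq T, is_upath e u v p /\ size p = l.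

From mathcomp Require Import all_boot zify.
Set Implicit Arguments. Unset Strict Implicit. Unset Printing Implicit Defensive.

(* Panconnectedness holds for every m (the bound m <= n/2 only guarantees more
   than two vertices) and in the more general graph on the m-subsets A with
   F \subset A \subset X, by induction on #|X :\: F|.  Given u != v, pick x in
   u :\: v; the vertices containing x and those avoiding x induce two smaller
   graphs of the same kind, V1 containing u and V0 containing v.  A short u-v
   path steps from u to a neighbour in V0 and continues inside V0; a long one
   first walks inside V1, then crosses over and traverses the whole of V0 by a
   Hamiltonian path ending at v.  The distance bound #|u :\: v| is what makes
   the lengths fit: every edge changes a set by one element. *)

Section Exchange.
Variable T : finType.
Implicit Types (A B : {set T}) (a b x y : T).

Definition exch A a b : {set T} := b |: (A :\ a).

Definition johnson_rel : rel {set T} := fun A B => #|A :\: B| == 1.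

Lemma in_exch A a b y : (y \in exch A a b) = (y == b) || (y != a) && (y \in A).
Proof. by rewrite !inE. Qed.

Lemma card_exch A a b : a \in A -> b \notin A -> #|exch A a b| = #|A|.
Proof.
by move=> aA bA; rewrite cardsU1 (cardsD1 a A) aA !inE (negbTE bA) andbF.
Qed.

Lemma setD_exch A a b : a \in A -> b \notin A -> A :\: exch A a b = [set a].
Proof.
move=> aA bA; apply/setP=> y; rewrite !inE.
case: (eqVneq y a) => [->|ya] /=.
  by rewrite aA; case: eqP => // ab; rewrite -ab aA in bA.
by case: (eqVneq y b) => [->|yb] /=; case: (y \in A).
Qed.

Lemma jrel_exch A a b : a \in A -> b \notin A -> johnson_rel A (exch A a b).
Proof. by move=> aA bA; rewrite /johnson_rel setD_exch // cards1. Qed.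

Lemma exch_neq A a b : b \notin A -> A != exch A a b.
Proof. by move=> bA; apply: contraNneq bA => ->; rewrite in_exch eqxx. Qed.

Lemma exch_exch A a x b : a \in A -> x \in A -> a != x -> b \notin A ->
  exch (exch A a b) x a = exch A x b.
Proof.
move=> aA xA ax bA; apply/setP=> y; rewrite !in_exch.
case: (eqVneq y a) => [->|ya] /=; first by rewrite aA ax orbT.
case: (eqVneq y b) => [->|yb] /=; last by rewrite andbC.
by case: eqP => // bx; rewrite bx xA in bA.
Qed.

Lemma card_exchD_in A B a b : a \in A -> a \notin B -> b \in B ->
  #|exch A a b :\: B| = #|A :\: B| - 1.
Proof.
move=> aA aB bB.
have -> : exch A a b :\: B = (A :\: B) :\ a.
  apply/setP=> y; rewrite !inE.
  case: (eqVneq y b) => [->|_] /=; first by rewrite bB /= !andbF.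
  by case: (y != a); case: (y \notin B).
by rewrite (cardsD1 a (A :\: B)) !inE aA aB; lia.
Qed.

Lemma card_exchD_out A B a b : a \in A -> a \notin B -> b \notin B -> b \notin A ->
  #|exch A a b :\: B| = #|A :\: B|.
Proof.
move=> aA aB bB bA.
have -> : exch A a b :\: B = b |: ((A :\: B) :\ a).
  apply/setP=> y; rewrite !inE; case: (eqVneq y b) => [->|_] /=.
    by rewrite (negbTE bB) /=; case: (eqVneq b a) => // ba; rewrite ba aA in bA.
  by case: (y != a); case: (y \notin B).
by rewrite cardsU1 [#|A :\: B|](cardsD1 a) !inE aA aB (negbTE bA) !andbF /=; lia.
Qed.

Lemma card_setD_sym A B : #|A| = #|B| -> #|B :\: A| = #|A :\: B|.
Proof. by move=> eAB; move: (cardsID A B) (cardsID B A); rewrite setIC; lia. Qed.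

Lemma card_setD_gt0 A B : #|A| = #|B| -> A != B -> 0 < #|A :\: B|.
Proof.
move=> eAB; apply: contraNT; rewrite -leqNgt leqn0 cards_eq0 setD_eq0 => AB.
by rewrite eqEcard AB eAB leqnn.
Qed.

Lemma card_setD_last_le A p :
  path (fun B C : {set T} => #|B :\: C| <= 1) A p -> #|A :\: last A p| <= size p.
Proof.
elim: p A => [|B p IHp] A /=; first by rewrite setDv cards0.
case/andP=> AB pB; have := IHp B pB.
have sub : A :\: last B p \subset (A :\: B) :|: (B :\: last B p).
  apply/subsetP=> y; rewrite !inE.
  by case: (y \in B); case: (y \in A); case: (y \in last B p).
have := subset_leq_card sub; have [+ _] := leq_card_setU (A :\: B) (B :\: last B p).
by move: AB; lia.
Qed.

End Exchange.

Lemma upath_cat (T : finType) (e : rel T) (P Q : {pred T}) u w w' v p q :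
  is_upath e u w p -> {subset u :: p <= P} -> is_upath e w' v q -> {subset w' :: q <= Q} ->
  e w w' -> [disjoint P & Q] -> is_upath e u v (p ++ w' :: q).
Proof.
case=> pp lp up sP [pq lq uq] sQ ww' PQ; split.
- by rewrite cat_path pp lp /= ww' pq.
- by rewrite last_cat lp /= lq.
- rewrite -cat_cons cat_uniq up uq andbT; apply/hasPn => z zq.
  by apply/negP => /sP zP; rewrite (disjointFl PQ (sQ z zq)) in zP.
Qed.

Section Slice.
Variable T : finType.
Implicit Types (A F X : {set T}) (x : T).

Definition slice F X m : {set {set T}} :=
  [set A : {set T} | [&& F \subset A, A \subset X & #|A| == m]].

Lemma in_slice F X m A : (A \in slice F X m) = [&& F \subset A, A \subset X & #|A| == m].
Proof. by rewrite inE. Qed.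

Lemma card_slice_elem F X m A : A \in slice F X m -> #|A| = m.
Proof. by rewrite in_slice => /and3P[_ _ /eqP]. Qed.

Lemma slice_setD1 F X m x A :
  (A \in slice F (X :\ x) m) = (A \in slice F X m) && (x \notin A).
Proof.
by rewrite !in_slice subsetD1; case: (F \subset A); case: (A \subset X);
  case: (#|A| == m); case: (x \in A).
Qed.

Lemma slice_setU1 F X m x A :
  (A \in slice (x |: F) X m) = (A \in slice F X m) && (x \in A).
Proof.
by rewrite !in_slice subUset sub1set; case: (F \subset A); case: (A \subset X);
  case: (#|A| == m); case: (x \in A).
Qed.

Lemma card_slice_split F X m x :
  #|slice F X m| = #|slice (x |: F) X m| + #|slice F (X :\ x) m|.
Proof.
rewrite -(cardsID [set A : {set T} | x \in A] (slice F X m)).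
by congr (_ + _); apply: eq_card => A; rewrite ?slice_setU1 ?slice_setD1 !inE // andbC.
Qed.

Lemma exch_in_slice F X m A a b : A \in slice F X m -> a \in A -> a \notin F ->
  b \in X -> b \notin A -> exch A a b \in slice F X m.
Proof.
rewrite !in_slice => /and3P[FA AX /eqP cA] aA aF bX bA.
rewrite card_exch // cA eqxx andbT; apply/andP; split.
  apply/subsetP=> y yF; rewrite in_exch (subsetP FA) // andbT.
  by apply/orP; right; apply: contraNneq aF => <-.
by apply/subsetP=> y; rewrite in_exch => /orP[/eqP->//|/andP[_ /(subsetP AX)]].
Qed.

(* For a fixed t in v :\: u, the sets exch u s t with s in u :\: v are distinct
   vertices of the slice, all different from u. *)
Lemma card_setD_lt_slice F X m u v : u \in slice F X m -> v \in slice F X m ->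
  u != v -> #|u :\: v| < #|slice F X m|.
Proof.
move=> uV vV uv; have := vV; rewrite in_slice => /and3P[Fv vX _].
have /card_gt0P[t] : 0 < #|v :\: u|.
  by apply: card_setD_gt0; rewrite 1?eq_sym // (card_slice_elem uV) (card_slice_elem vV).
rewrite inE => /andP[tu tv].
pose f s := exch u s t.
have inj_f : {in u :\: v &, injective f}.
  move=> s1 s2; rewrite !inE => /andP[_ s1u] /andP[_ s2u] e12.
  apply/eqP; apply: contraT => ne.
  have : s1 \in f s2 by rewrite in_exch ne s1u orbT.
  by rewrite -e12 in_exch eqxx /= orbF => /eqP s1t; rewrite -s1t s1u in tu.
have sub : u |: (f @: (u :\: v)) \subset slice F X m.
  apply/subsetP=> A; rewrite in_setU1 => /orP[/eqP->//|/imsetP[s]].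
  rewrite inE => /andP[sv su] ->; apply: exch_in_slice => //; last exact: (subsetP vX).
  by apply: contra sv; apply: (subsetP Fv).
have uf : u \notin f @: (u :\: v).
  by apply/imsetP=> -[s _ /eqP]; apply/negP; apply: exch_neq.
by apply: leq_trans (subset_leq_card sub); rewrite cardsU1 uf card_in_imset.
Qed.

Definition slice_panconnected F X m : Prop :=
  forall u v, u \in slice F X m -> v \in slice F X m -> u != v ->
  forall l, #|u :\: v| <= l <= #|slice F X m| - 1 ->
  exists p, [/\ is_upath (@johnson_rel T) u v p, size p = l & {subset p <= slice F X m}].

Lemma slice_hamiltonian F X m w v : slice_panconnected F X m ->
  w \in slice F X m -> v \in slice F X m -> (w = v -> #|slice F X m| <= 1) ->
  exists p, [/\ is_upath (@johnson_rel T) w v p, size p = #|slice F X m| - 1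
              & {subset p <= slice F X m}].
Proof.
move=> panF wV vV wv; case: (eqVneq w v) => [ewv|ne].
  by exists [::]; split=> //=; apply/esym/eqP; rewrite subn_eq0 wv.
apply: panF => //; rewrite leqnn andbT -ltnS.
by apply: leq_trans (card_setD_lt_slice wV vV ne) _; lia.
Qed.

Section Step.
Variables (F X : {set T}) (m : nat) (x : T).
Hypothesis xF : x \notin F.
Hypothesis pan1 : slice_panconnected (x |: F) X m.
Hypothesis pan0 : slice_panconnected F (X :\ x) m.

Local Notation V := (slice F X m).
Local Notation V1 := (slice (x |: F) X m).
Local Notation V0 := (slice F (X :\ x) m).

Lemma sub_slice1 : {subset V1 <= V}.
Proof. by move=> z; rewrite slice_setU1 => /andP[]. Qed.

Lemma sub_slice0 : {subset V0 <= V}.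
Proof. by move=> z; rewrite slice_setD1 => /andP[]. Qed.

Lemma disjoint_slices : [disjoint V1 & V0].
Proof.
by apply/pred0P=> z /=; rewrite slice_setU1 slice_setD1; case: (x \in z); rewrite !andbF.
Qed.

Lemma exch_in_slice0 u b : u \in V1 -> b \in X -> b \notin u -> exch u x b \in V0.
Proof.
move=> u1 bX bu; have := u1; rewrite slice_setU1 => /andP[uV xu].
rewrite slice_setD1 exch_in_slice // in_exch eqxx /= orbF.
by apply: contra bu => /eqP <-.
Qed.

Lemma mem_slice1 u : u \in V1 -> x \in u.
Proof. by rewrite slice_setU1 => /andP[]. Qed.

Lemma notin_slice0 v : v \in V0 -> x \notin v.
Proof. by rewrite slice_setD1 => /andP[]. Qed.

Lemma subset_cons_slice (W : {set {set T}}) z p :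
  {subset W <= V} -> z \in W -> {subset p <= W} -> {subset z :: p <= V}.
Proof. by move=> WV zW pW y; rewrite inE => /orP[/eqP->|/pW]; apply: WV. Qed.

Lemma upath_via_slice0 u v w l : u \in V1 -> v \in V0 -> w \in V0 -> johnson_rel u w ->
  w != v -> #|w :\: v| < l <= #|V0| ->
  exists p, [/\ is_upath (@johnson_rel T) u v p, size p = l & {subset p <= V}].
Proof.
move=> u1 v0 w0 uw wv /andP[wvl lV0].
have [|p [pp sp p0]] := pan0 w0 v0 wv (l := l.-1); first by lia.
exists (w :: p); split; [|by rewrite /= sp; lia|exact: subset_cons_slice sub_slice0 w0 p0].
have uu : is_upath (@johnson_rel T) u u [::] by [].
apply: (upath_cat uu _ pp _ uw disjoint_slices).
  by move=> z; rewrite inE => /eqP->.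
by move=> z; rewrite inE => /orP[/eqP->|/p0].
Qed.

(* Walk in V1 from u to w = exch u a b, cross to exch w x a = exch u x b in V0,
   then traverse all of V0. *)
Lemma upath_via_slice1 u v b l : u \in V1 -> v \in V0 -> b \in X -> b \notin u ->
  (exch u x b = v -> #|V0| <= 1) -> #|V0| < l <= #|V| - 1 ->
  exists p, [/\ is_upath (@johnson_rel T) u v p, size p = l & {subset p <= V}].
Proof.
move=> u1 v0 bX bu wv /andP[lV0 lV].
rewrite (card_slice_split _ _ _ x) in lV.
have /card_gt0P[z] : 0 < #|V1 :\ u|.
  by move: lV lV0; rewrite (cardsD1 u V1) u1; clear; lia.
rewrite in_setD1 => /andP[zu z1].
have /card_gt0P[a] : 0 < #|u :\: z|.
  by apply: card_setD_gt0; rewrite 1?eq_sym // (card_slice_elem z1) (card_slice_elem u1).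
rewrite in_setD => /andP[az au].
have xFz : x |: F \subset z by move: z1; rewrite in_slice => /and3P[].
have aF : a \notin F by apply: contra az => aF; apply: (subsetP xFz); rewrite !inE aF orbT.
have ax : a != x by apply: contra az => /eqP ->; apply: (subsetP xFz); rewrite !inE eqxx.
have xu := mem_slice1 u1.
set w := exch u a b; set w' := exch u x b.
have w1 : w \in V1.
  rewrite slice_setU1 in_exch (eq_sym x a) ax xu orbT andbT.
  exact: exch_in_slice (sub_slice1 u1) au aF bX bu.
have ww' : johnson_rel w w'.
  rewrite /w' -(exch_exch au xu ax bu); apply: jrel_exch.
    by rewrite in_exch (eq_sym x a) ax xu orbT.
  by rewrite in_exch eqxx /= orbF; apply: contraNneq bu => <-.
have [|p1 [pp1 sp1 p1V1]] := pan1 u1 w1 (exch_neq a bu) (l := l - #|V0|).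
  by rewrite (eqP (jrel_exch au bu)); move: lV lV0; clear; lia.
have w'0 : w' \in V0 by apply: exch_in_slice0.
have [p0 [pp0 sp0 p0V0]] := slice_hamiltonian pan0 w'0 v0 wv.
exists (p1 ++ w' :: p0); split.
- apply: upath_cat pp1 _ pp0 _ ww' disjoint_slices.
    by move=> y; rewrite inE => /orP[/eqP->|/p1V1].
  by move=> y; rewrite inE => /orP[/eqP->|/p0V0].
- have V0_gt0 : 0 < #|V0| by apply/card_gt0P; exists v.
  have {}sp0 : size p0 = #|V0| - 1 := sp0.
  by rewrite size_cat /= sp1 sp0; move: lV0 V0_gt0; clear; lia.
- have q_sub := subset_cons_slice sub_slice0 w'0 p0V0.
  by move=> y; rewrite mem_cat => /orP[/p1V1/sub_slice1|/q_sub].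
Qed.

Lemma exists_exch_slice0 u v : u \in V1 -> v \in V0 ->
  exists b, [/\ b \in X, b \notin u, exch u x b = v -> #|V0| <= 1
              & #|exch u x b :\: v| <= maxn #|u :\: v|.-1 1].
Proof.
move=> u1 v0; have xu := mem_slice1 u1; have xv := notin_slice0 v0.
have vX : v \subset X :\ x by move: v0; rewrite in_slice => /and3P[].
have cuv : #|u| = #|v|.
  by rewrite (card_slice_elem (sub_slice1 u1)) (card_slice_elem (sub_slice0 v0)).
have /card_gt0P[b0] : 0 < #|v :\: u|.
  by rewrite card_setD_sym //; apply/card_gt0P; exists x; rewrite inE xu xv.
rewrite inE => /andP[b0u b0v].
have /setD1P[_ b0X] : b0 \in X :\ x by apply: (subsetP vX).
have j_b0 := card_exchD_in xu xv b0v.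
case: (ltnP 1 #|u :\: v|) => [j2|j1].
  exists b0; split=> // [evw|]; last by rewrite j_b0 subn1 leq_max leqnn.
  by move: j_b0 j2; rewrite evw setDv cards0 => /esym/eqP; rewrite subn_eq0 ltnNge => ->.
case: (leqP #|V0| 1) => V0_le1.
  by exists b0; split=> //; rewrite j_b0 leq_max (leq_trans (leq_subr _ _) j1) orbT.
have /card_gt0P[z] : 0 < #|V0 :\ v|.
  by move: V0_le1; rewrite (cardsD1 v V0) v0 add1n ltnS.
rewrite in_setD1 => /andP[zv z0].
have /card_gt0P[b] : 0 < #|z :\: v|.
  by apply: card_setD_gt0; rewrite // (card_slice_elem z0) (card_slice_elem (sub_slice0 v0)).
rewrite inE => /andP[bv bz].
have /setD1P[bx bX] : b \in X :\ x by move: z0; rewrite in_slice => /and3P[_ /subsetP->].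
have bu : b \notin u.
  apply/negP=> bu; move: j1.
  by rewrite (cardsD1 x) (cardsD1 b) !inE xu xv bu (negbTE bv) bx.
exists b; split=> // [evw|].
  by move: bv; rewrite -evw in_exch eqxx.
by rewrite card_exchD_out // leq_max j1 orbT.
Qed.

Lemma upath_slice1_slice0 u v l : u \in V1 -> v \in V0 -> #|u :\: v| <= l <= #|V| - 1 ->
  exists p, [/\ is_upath (@johnson_rel T) u v p, size p = l & {subset p <= V}].
Proof.
move=> u1 v0 /andP[jl lV]; have xu := mem_slice1 u1; have xv := notin_slice0 v0.
have j_gt0 : 0 < #|u :\: v| by apply/card_gt0P; exists x; rewrite inE xu xv.
case: (eqVneq l 1) => [l1|l_neq1].
  have uv : u != v by apply: contraNneq xv => <-.
  exists [:: v]; split=> //; last by move=> y; rewrite inE => /eqP->; apply: sub_slice0.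
  split; rewrite //= /johnson_rel ?inE ?uv ?andbT //.
  by rewrite eqn_leq -{1}l1 jl card_gt0; apply/set0Pn; exists x; rewrite inE xu xv.
have [b [bX bu wv w_v]] := exists_exch_slice0 u1 v0.
case: (leqP l #|V0|) => lV0; last by apply: upath_via_slice1 u1 v0 bX bu wv _; rewrite lV0.
apply: upath_via_slice0 u1 v0 (exch_in_slice0 u1 bX bu) (jrel_exch xu bu) _ _.
  apply/eqP => /wv V0_le1.
  by move: l_neq1 lV0 V0_le1 (leq_trans j_gt0 jl); clear; lia.
by rewrite lV0 andbT; move: w_v jl l_neq1 j_gt0; clear; lia.
Qed.

End Step.
End Slice.

Lemma slice_panconnectedP (T : finType) (F X : {set T}) m : slice_panconnected F X m.
Proof.
have [r] := ubnP #|X :\: F|; elim: r F X => // r IHr F X ltFX u v uV vV uv l hl.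
have /card_gt0P[x] : 0 < #|u :\: v|.
  by apply: card_setD_gt0; rewrite // (card_slice_elem uV) (card_slice_elem vV).
rewrite inE => /andP[xv xu].
have xF : x \notin F by apply: contra xv; apply: subsetP; move: vV; rewrite in_slice => /and3P[].
have xX : x \in X by move: uV; rewrite in_slice => /and3P[_ /subsetP uX _]; apply: uX.
have lt_r : #|(X :\: F) :\ x| < r.
  by move: ltFX; rewrite (cardsD1 x (X :\: F)) !inE (negbTE xF) xX add1n ltnS.
have eq1 : X :\: (x |: F) = (X :\: F) :\ x.
  by apply/setP=> y; rewrite !inE negb_or andbA.
have eq0 : (X :\ x) :\: F = (X :\: F) :\ x.
  by apply/setP=> y; rewrite !inE andbCA.
have pan1 := IHr (x |: F) X; have pan0 := IHr F (X :\ x).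
rewrite eq1 eq0 in pan1 pan0.
apply: (upath_slice1_slice0 xF (pan1 lt_r) (pan0 lt_r)) hl.
  by rewrite slice_setU1 uV.
by rewrite slice_setD1 vV.
Qed.

Lemma leq_bin n k : 0 < k < n -> n <= 'C(n, k).
Proof.
elim: n k => [|n IHn] [|[|k]] // lt_kn; first by rewrite bin1.
rewrite binS addnC -addn1; apply: leq_add; first exact: IHn.
by rewrite bin_gt0.
Qed.

Lemma card_slice_setT (T : finType) m : #|slice set0 [set: T] m| = 'C(#|T|, m).
Proof. by rewrite -card_draws; apply: eq_card => A; rewrite in_slice sub0set subsetT !inE. Qed.

Lemma card_johnson_vertex n m : #|johnson_vertex n m| = 'C(n, m).
Proof.
by rewrite card_sig -[in RHS](card_ord n) -card_draws; apply: eq_card => A; rewrite !inE.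
Qed.

Lemma johnson_adjE n m (v w : johnson_vertex n m) :
  0 < m -> johnson_adj v w = johnson_rel (val v) (val w).
Proof.
move=> m_gt0; have := cardsID (val w) (val v); rewrite (eqP (valP v)) => cardv.
by apply/eqP/eqP; move: cardv; clear -m_gt0; lia.
Qed.

Lemma card_setD_le_johnson_upath n m (u v : johnson_vertex n m) p :
  is_upath (@johnson_adj n m) u v p -> #|val u :\: val v| <= size p.
Proof.
case=> pp lp _; rewrite -(size_map val) -lp -last_map; apply: card_setD_last_le.
rewrite path_map; apply: sub_path pp => a b /eqP /= ab_card.
change (#|val a :\: val b| <= 1).
by move: (cardsID (val b) (val a)); rewrite ab_card (eqP (valP a)); clear; lia.
Qed.

Lemma johnson_upath_lift n m (u v : johnson_vertex n m) p : 0 < m ->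
  is_upath (@johnson_rel _) (val u) (val v) p -> {subset p <= slice set0 setT m} ->
  exists2 q, is_upath (@johnson_adj n m) u v q & size q = size p.
Proof.
move=> m_gt0 [pp lp up] pV; exists (map (insubd u) p); last by rewrite size_map.
have val_q : map val (map (insubd u) p) = p.
  rewrite -map_comp; apply: map_id_in => A /pV; rewrite in_slice => /and3P[_ _ cA].
  exact: insubdK.
split.
- by rewrite (eq_path (fun a b => johnson_adjE a b m_gt0)) -path_map val_q.
- by apply: val_inj; rewrite -last_map val_q.
- by rewrite -(map_inj_uniq val_inj) /= val_q.
Qed.

Theorem theorem3p6 (n m : nat) (hn : 3 <= n) (hm1 : 1 <= m) (hm2 : m.*2 <= n) :
  panconnected (@johnson_adj n m).
Proof.
split.
  rewrite card_johnson_vertex; apply: leq_trans hn (leq_bin _).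
  by rewrite hm1 /=; move: hm2; rewrite -addnn; clear -hm1; lia.
move=> u v uv d [[p [pp <-]] _] l /andP[dl lN].
have inV (w : johnson_vertex n m) : val w \in slice set0 setT m.
  by rewrite in_slice sub0set subsetT (valP w).
have uv' : val u != val v by rewrite (inj_eq val_inj).
have [|q [qq <- qV]] := slice_panconnectedP (inV u) (inV v) uv' (l := l).
  rewrite card_slice_setT card_ord -card_johnson_vertex lN andbT.
  exact: leq_trans (card_setD_le_johnson_upath pp) dl.
have [r rr sr] := johnson_upath_lift hm1 qq qV.
by exists r.
Qed.
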